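(* If $P\in\{0,1\}^{k\times\ell}$ is a pattern with (at most) two nonempty rows, more precisely with exactly two nonempty rows, then $P$ is row-bounding, i.e., $\mathrm{Av}(P)$ is row-bounded.
   Context: All matrices are binary; rows numbered top to bottom, columns left to right; a row is nonempty if it contains a 1-entry. $(a,b]=\{a+1,\dots,b\}$. A pattern $P\in\{0,1\}^{k\times\ell}$ is an interval minor of $M\in\{0,1\}^{m\times n}$ if there are integers $0=r_0<\dots<r_k=m$ and $0=c_0<\dots<c_\ell=n$ such that for each 1-entry $(i,j)$ of $P$ the submatrix of $M$ on rows $(r_{i-1},r_i]$ and columns $(c_{j-1},c_j]$ contains a 1-entry; otherwise $M$ avoids $P$. $\mathrm{Av}(P)$ is the set of binary matrices avoiding $P$. $M\in\mathrm{Av}(P)$ is critical if changing any single 0-entry of $M$ to a 1-entry produces a matrix containing $P$. A horizontal 0-run is a maximal set of consecutive 0-entries within one row; the complexity of a row is the number of such runs in it. $\mathrm{Av}(P)$ is row-bounded (and $P$ row-bounding) if there is a constant bounding the complexity of every row of every critical matrix in $\mathrm{Av}(P)$. *)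

From mathcomp Require Import all_boot all_algebra.
Set Implicit Arguments. Unset Strict Implicit. Unset Printing Implicit Defensive.

(* r : nat -> nat encodes 0 = r_0 < r_1 < ... < r_k = m.
   Row block i (0-indexed, i < k) is {a | r i <= a < r (i+1)}, i.e. the paper's
   (r_{i-1}, r_i] shifted to 0-indexing. *)
Definition cut_seq (r : nat -> nat) (k m : nat) : Prop :=
  r 0 = 0 /\ r k = m /\ (forall i, i < k -> r i < r i.+1).

Definition contains (k l m n : nat) (P : 'M[bool]_(k, l)) (M : 'M[bool]_(m, n)) : Prop :=
  exists r c : nat -> nat, cut_seq r k m /\ cut_seq c l n /\
    forall (i : 'I_k) (j : 'I_l), P i j ->
      exists (a : 'I_m) (b : 'I_n),
        [/\ r i <= a < r i.+1, c j <= b < c j.+1 & M a b].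

Definition avoids (k l m n : nat) (P : 'M[bool]_(k, l)) (M : 'M[bool]_(m, n)) : Prop :=
  ~ contains P M.

Definition set_one (m n : nat) (M : 'M[bool]_(m, n)) (a : 'I_m) (b : 'I_n) : 'M[bool]_(m, n) :=
  \matrix_(i, j) (M i j || ((i == a) && (j == b))).

Definition critical (k l m n : nat) (P : 'M[bool]_(k, l)) (M : 'M[bool]_(m, n)) : Prop :=
  avoids P M /\
  forall (a : 'I_m) (b : 'I_n), M a b = false -> contains P (set_one M a b).

(* Number of horizontal 0-runs in row a: count the 0-entries that start a run,
   i.e. 0-entries whose left neighbour (if any) is a 1-entry. *)
Definition row_complexity (m n : nat) (M : 'M[bool]_(m, n)) (a : 'I_m) : nat :=
  #|[set b : 'I_n | ~~ M a b && [forall b' : 'I_n, (b'.+1 == b :> nat) ==> M a b']]|.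

Definition row_bounding (k l : nat) (P : 'M[bool]_(k, l)) : Prop :=
  exists C : nat, forall (m n : nat) (M : 'M[bool]_(m, n)),
    critical P M -> forall a : 'I_m, row_complexity M a <= C.

Definition nonempty_row (k l : nat) (P : 'M[bool]_(k, l)) (i : 'I_k) : bool :=
  [exists j : 'I_l, P i j].

From mathcomp Require Import all_boot all_algebra.
From mathcomp Require Import zify.
Set Implicit Arguments. Unset Strict Implicit. Unset Printing Implicit Defensive.

(* Let p < q be the nonempty rows of P. For a fixed row cut, P is an interval minor of M iff
   every column j of P can be sent to columns x_j, y_j carrying 1-entries of the row blocks
   p and q (where P has them), all left of x_(j+1) and y_(j+1).
   Fix a critical M and a row a with set of 1-columns O, and rank each column b by the
   number of elements of O left of it. Setting a 0-entry (a, b) to 1 creates P, say with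
   row a in block p. Then the rank of b is less than l above 0 or above a gap of O met by
   block q; otherwise the new 1 could be replaced by 1-entries of row a already present.
   Even with block q as large as possible, fewer than 2l gaps of O are met: otherwise
   alternating between them embeds P with row a alone as block p. Starts of distinct
   0-runs of row a have distinct ranks, so there are at most 4l^2 of them. *)

Section CountBelow.

Variable O : nat -> bool.

Definition count_below (c : nat) : nat := count O (iota 0 c).

Definition enum_below (n : nat) : seq nat := filter O (iota 0 n).

Lemma count_below_split c1 c2 : c1 <= c2 ->
  count_below c2 = count_below c1 + count O (iota c1 (c2 - c1)).
Proof. by move=> le12; rewrite /count_below -{1}(subnKC le12) iotaD count_cat. Qed.

Lemma count_below_mono c1 c2 : c1 <= c2 -> count_below c1 <= count_below c2.
Proof. by move=> /count_below_split ->; rewrite leq_addr. Qed.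

Lemma count_belowS c : count_below c.+1 = count_below c + O c.
Proof. by rewrite (count_below_split (leqnSn c)) subSnn /= addn0. Qed.

Lemma count_below_ltn c1 c2 o : c1 <= o < c2 -> O o -> count_below c1 < count_below c2.
Proof.
move=> /andP [le1o lto2] Oo; have le12 : c1 <= c2 by lia.
rewrite (count_below_split le12) -addn1 leq_add2l -has_count; apply/hasP.
by exists o; rewrite // mem_iota subnKC ?le1o.
Qed.

Lemma count_below_bounded n c : (forall v, O v -> v < n) -> count_below c <= count_below n.
Proof.
move=> On; case: (leqP c n) => [/count_below_mono //|/ltnW le_nc].
rewrite (count_below_split le_nc) -[leqRHS]addn0 leq_add2l leqn0 -(count_pred0 (iota n (c - n))).
apply/eqP/eq_in_count => v; rewrite mem_iota => /andP [le_nv _] /=.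
by apply/negP => /On; lia.
Qed.

Lemma size_enum_below n : size (enum_below n) = count_below n.
Proof. exact: size_filter. Qed.

Lemma nth_enum_below n i : i < count_below n ->
  O (nth 0 (enum_below n) i) /\ nth 0 (enum_below n) i < n.
Proof.
rewrite -size_enum_below => /(mem_nth 0).
by rewrite mem_filter mem_iota => /andP [-> /andP [_ ->]].
Qed.

Lemma nth_enum_below_ltE n c i : c <= n -> i < count_below n ->
  (nth 0 (enum_below n) i < c) = (i < count_below c).
Proof.
move=> le_cn; rewrite /count_below /enum_below -(subnKC le_cn) iotaD.
rewrite filter_cat nth_cat size_filter count_cat add0n.
case: ifP => [ltic _|/negbT]; first by have [_ ->] := nth_enum_below ltic.
rewrite -leqNgt => leci ltin; apply/negbTE; rewrite -leqNgt.
have : nth 0 (filter O (iota c (n - c))) (i - count O (iota 0 c)) \in filter O (iota c (n - c)).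
  by apply: mem_nth; rewrite size_filter ltn_subLR.
by rewrite mem_filter mem_iota => /andP [_ /andP []].
Qed.

Lemma nth_enum_below_ltn n i j : i < j -> j < count_below n ->
  nth 0 (enum_below n) i < nth 0 (enum_below n) j.
Proof.
move=> ltij ltjn; apply: (sorted_ltn_nth ltn_trans); rewrite ?inE ?size_enum_below //; last lia.
exact/sorted_filter/iota_ltn_sorted/ltn_trans.
Qed.

End CountBelow.

Lemma bounded_choice (P : nat -> nat -> bool) l :
  (forall j, j < l -> exists y, P j y) -> exists f : nat -> nat, forall j, j < l -> P j (f j).
Proof.
move=> exP; have exP' j : exists y, (j < l) ==> P j y.
  by case: (ltnP j l) => [/exP [y Py]|]; [exists y; rewrite Py | exists 0].
by exists (fun j => xchoose (exP' j)) => j ltjl; exact: (implyP (xchooseP (exP' j))).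
Qed.

(* The pattern with rows s and t is an interval minor of a matrix with two row blocks of
   column supports X and Y. *)
Definition embeds_rows (s t : nat -> bool) (l n : nat) (X Y : nat -> bool) : Prop :=
  exists x y : nat -> nat,
    (forall j, j < l -> [/\ x j < n, y j < n, s j ==> X (x j) & t j ==> Y (y j)]) /\
    (forall j, j.+1 < l -> maxn (x j) (y j) < minn (x j.+1) (y j.+1)).

Lemma embeds_rows_mono s t l n (X Y X' Y' : nat -> bool) :
  (forall c, X c -> X' c) -> (forall c, Y c -> Y' c) ->
  embeds_rows s t l n X Y -> embeds_rows s t l n X' Y'.
Proof.
move=> subX subY [x [y [hit sep]]]; exists x, y; split=> // j /hit [-> -> sX tY].
by split=> //; apply/implyP; [move/(implyP sX)/subX | move/(implyP tY)/subY].
Qed.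

Lemma embeds_rows_swap s t l n X Y : embeds_rows s t l n X Y -> embeds_rows t s l n Y X.
Proof.
move=> [x [y [hit sep]]]; exists y, x; split; first by move=> j /hit [].
by move=> j /sep; rewrite maxnC minnC.
Qed.

(* The gaps of O met by Y, the gap of y being named by the number of elements of O up to y. *)
Definition gap_classes (O Y : nat -> bool) (n : nat) : seq nat :=
  undup [seq count_below O y.+1 | y <- iota 0 n & Y y].

Lemma gap_classesP (O Y : nat -> bool) n v :
  reflect (exists y, [/\ y < n, Y y & count_below O y.+1 = v]) (v \in gap_classes O Y n).
Proof.
rewrite mem_undup; apply: (iffP mapP) => [[y]|[y [ltyn Yy <-]]].
  by rewrite mem_filter mem_iota => /andP [Yy /andP [_ ltyn]] ->; exists y.
by exists y; rewrite // mem_filter mem_iota Yy ltyn.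
Qed.

Lemma gap_classes_sub O (Y Y' : nat -> bool) n v :
  (forall c, Y c -> Y' c) -> v \in gap_classes O Y n -> v \in gap_classes O Y' n.
Proof. by move=> subY /gap_classesP [y [ltyn /subY Y'y <-]]; apply/gap_classesP; exists y. Qed.

(* Given 2l gaps, take y_j in the (2j)-th one and x_j the next element of O: the
   (2j+1)-th gap separates x_j from y_(j+1). *)
Lemma size_gap_classes s t l n (O Y : nat -> bool) :
  (forall v, O v -> v < n) -> ~ embeds_rows s t l n O Y -> size (gap_classes O Y n) < 2 * l.
Proof.
move=> On noemb; rewrite ltnNge; apply/negP => large; apply: noemb.
pose S := sort leq (gap_classes O Y n).
have sizeS : size S = size (gap_classes O Y n) by rewrite size_sort.
have S_ltn i j : i < j -> j < size S -> nth 0 S i < nth 0 S j.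
  move=> ltij ltjS; apply: (sorted_ltn_nth ltn_trans); rewrite ?inE //; last lia.
  by rewrite ltn_sorted_uniq_leq sort_uniq undup_uniq sort_sorted //; exact: leq_total.
have memS i : i < size S -> nth 0 S i \in gap_classes O Y n.
  by move=> ltiS; rewrite -(mem_sort leq) mem_nth.
have [y Hy] : exists y : nat -> nat, forall j, j < l ->
    [&& y j < n, Y (y j) & count_below O (y j).+1 == nth 0 S j.*2].
  apply: (@bounded_choice (fun j y => [&& y < n, Y y & count_below O y.+1 == nth 0 S j.*2]) l).
  move=> j ltjl.
  have /gap_classesP [y [ltyn Yy ey]] : nth 0 S j.*2 \in gap_classes O Y n by apply: memS; lia.
  by exists y; rewrite ltyn Yy ey eqxx.
have class_lt j : j < l -> nth 0 S j.*2 < count_below O n.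
  move=> ltjl; have lt2jS : j.*2.+1 < size S by lia.
  have /gap_classesP [y' [_ _ ey']] := memS _ lt2jS.
  apply: leq_trans (S_ltn _ _ (ltnSn _) lt2jS) _; rewrite -ey'; exact: count_below_bounded.
pose x j := nth 0 (enum_below O n) (nth 0 S j.*2).
have x_gtn j : j < l -> y j < x j.
  move=> /[dup] /Hy /and3P [ltyn _ /eqP ey] /class_lt ltS.
  by rewrite ltnNge -ltnS /x nth_enum_below_ltE // ey ltnn.
exists x, y; split=> [j ltjl|j ltjl].
  have /and3P [-> -> _] := Hy j ltjl.
  by have [-> ->] := nth_enum_below (class_lt j ltjl); rewrite !implybT.
have /and3P [ltyn' _ /eqP ey'] := Hy j.+1 ltjl.
have x_ltn : x j < y j.+1.
  rewrite /x nth_enum_below_ltE ?class_lt; try lia.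
  have := count_belowS O (y j.+1); rewrite ey'.
  have := S_ltn j.*2 j.*2.+1 (ltnSn _) ltac:(lia).
  have := S_ltn j.*2.+1 j.+1.*2 ltac:(lia) ltac:(lia).
  lia.
have := x_gtn j ltac:(lia); have := x_gtn j.+1 ltjl; lia.
Qed.

Lemma retract_ltn (e : nat -> nat) lo b j u w :
  lo <= e j -> e j.+1 < b -> e j < e j.+1 -> u < w ->
  (if lo <= u <= b then e j else u) < (if lo <= w <= b then e j.+1 else w).
Proof. by move=> *; do 2 case: ifP => /andP; lia. Qed.

(* The columns in [lo, b] of the j-th column block are moved onto the j-th element of O
   in [lo, b), freeing the top row from column b. *)
Lemma embeds_rows_retract s t l n (O X Y : nat -> bool) lo b (x y : nat -> nat) :
  (forall c, O c -> X c) -> lo <= b < n -> count_below O lo + l <= count_below O b ->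
  (forall j, j < l -> [/\ x j < n, y j < n, s j ==> X (x j) || (x j == b) & t j ==> Y (y j)]) ->
  (forall j, j.+1 < l -> maxn (x j) (y j) < minn (x j.+1) (y j.+1)) ->
  (forall j, j < l -> t j -> (y j < lo) || (b < y j)) ->
  embeds_rows s t l n X Y.
Proof.
move=> OX /andP [le_lob ltbn] many hit sep y_out.
pose e j := nth 0 (enum_below O n) (count_below O lo + j).
have e_rank j : j < l -> count_below O lo + j < count_below O n.
  move=> ltjl; apply: leq_trans (count_below_mono O (ltnW ltbn)); lia.
have e_in j : j < l -> [/\ O (e j), e j < n, lo <= e j & e j < b].
  move=> ltjl; have [Oe lten] := nth_enum_below (e_rank j ltjl).
  split=> //; last by rewrite nth_enum_below_ltE ?e_rank //; lia.
  by rewrite leqNgt nth_enum_below_ltE ?e_rank //; lia.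
have e_ltn j : j.+1 < l -> e j < e j.+1.
  by move=> ltjl; apply: nth_enum_below_ltn; [lia | exact: e_rank].
pose f j v := if lo <= v <= b then e j else v.
exists (fun j => f j (x j)), (fun j => f j (y j)); split=> [j ltjl | j ltjl].
  have [ltxn ltyn sX tY] := hit j ltjl; have [Oe lten _ _] := e_in j ltjl.
  rewrite /f; split; try by case: ifP.
    apply/implyP=> sj; case: ifP => [_|/negP x_out]; first exact: OX.
    by case/orP: (implyP sX sj) => // /eqP xb; case: x_out; rewrite xb le_lob leqnn.
  apply/implyP=> tj; case: ifP => [/andP [lo_y y_b]|_]; last exact: implyP tY tj.
  by case/orP: (y_out j ltjl tj); lia.
have [_ _ le_lo _] := e_in j (ltnW ltjl); have [_ _ _ lt_b] := e_in j.+1 ltjl.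
have lt_ee := e_ltn j ltjl; have := sep j ltjl.
rewrite !gtn_max !leq_min => /andP [/andP [xx xy] /andP [yx yy]].
by rewrite !retract_ltn.
Qed.

(* Unless b itself is used in the bottom row, lo is the column right after the last
   bottom-row column left of b, and [lo, b) contains fewer than l elements of O by
   embeds_rows_retract. *)
Lemma count_below_near_gap s t l n (O X Y : nat -> bool) b :
  (forall c, O c -> X c) -> ~~ O b -> b < n ->
  embeds_rows s t l n (fun c => X c || (c == b)) Y -> ~ embeds_rows s t l n X Y ->
  exists2 beta, beta \in 0 :: gap_classes O Y n & beta <= count_below O b < beta + l.
Proof.
move=> OX Ob ltbn [x [y [hit sep]]] noemb.
case: (boolP [exists j : 'I_l, t j && (y j == b)]) => [/existsP [j /andP [tj /eqP yb]] | no_yb].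
  exists (count_below O b); last by rewrite leqnn /=; have := ltn_ord j; lia.
  rewrite inE; apply/orP; right; apply/gap_classesP; exists b.
  have [_ _ _ tY] := hit j (ltn_ord j).
  by rewrite count_belowS (negbTE Ob) addn0 ltbn -{1}yb (implyP tY tj).
pose A := fun j : 'I_l => t j && (y j < b).
pose lo := \max_(j in A) (y j).+1.
have le_lob : lo <= b by apply/bigmax_leqP => j /andP [_].
exists (count_below O lo).
  have [j0 Aj0 | noA] := pickP A; last by rewrite /lo big_pred0.
  have : 0 < #|A| by apply/card_gt0P; exists j0.
  move=> /(eq_bigmax_cond (fun j : 'I_l => (y j).+1)) [i0 /andP [ti0 _] eq_lo].
  rewrite /lo eq_lo inE; apply/orP; right; apply/gap_classesP; exists (y i0).
  by have [_ ltyn _ tY] := hit i0 (ltn_ord i0); rewrite ltyn (implyP tY ti0).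
rewrite count_below_mono //= ltnNge; apply/negP => many; apply: noemb.
apply: (embeds_rows_retract OX _ many hit sep); first by rewrite le_lob.
move=> j ltjl tj; case: (ltngtP (y j) b) => [ltyb | ltby | yb].
- by rewrite (@leq_bigmax_cond _ A (fun j => (y j).+1) (Ordinal ltjl)) //= /A tj ltyb.
- by rewrite orbT.
- by case/existsP: no_yb; exists (Ordinal ltjl); rewrite /= tj yb eqxx.
Qed.

Definition near_gaps (O Y : nat -> bool) (n l : nat) : seq nat :=
  [seq beta + i | beta <- 0 :: gap_classes O Y n, i <- iota 0 l].

Lemma size_near_gaps s t l n (O Y : nat -> bool) :
  (forall v, O v -> v < n) -> ~ embeds_rows s t l n O Y -> size (near_gaps O Y n l) <= 2 * l * l.
Proof.
move=> On noemb; rewrite size_allpairs size_iota leq_mul2r.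
by rewrite (size_gap_classes On noemb) orbT.
Qed.

Lemma count_below_in_near_gaps s t l n (O X Y Y' : nat -> bool) b :
  (forall c, O c -> X c) -> (forall c, Y c -> Y' c) -> ~~ O b -> b < n ->
  embeds_rows s t l n (fun c => X c || (c == b)) Y -> ~ embeds_rows s t l n X Y ->
  count_below O b \in near_gaps O Y' n l.
Proof.
move=> OX subY Ob ltbn emb noemb.
have [beta beta_gap /andP [le_beta lt_beta]] := count_below_near_gap OX Ob ltbn emb noemb.
rewrite -(subnKC le_beta); apply: allpairs_f; last by rewrite mem_iota; lia.
by move: beta_gap; rewrite !inE => /orP [-> // | /(gap_classes_sub subY) ->]; rewrite orbT.
Qed.

Definition col_support m n (M : 'M[bool]_(m, n)) (lo hi : nat) : nat -> bool :=
  fun c => [exists i : 'I_m, exists j : 'I_n, [&& lo <= i < hi, j == c :> nat & M i j]].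

Definition block_support m n (M : 'M[bool]_(m, n)) (r : nat -> nat) (i : nat) : nat -> bool :=
  col_support M (r i) (r i.+1).

Definition pattern_row k l (P : 'M[bool]_(k, l)) (i : 'I_k) : nat -> bool :=
  fun j => [exists j' : 'I_l, (j' == j :> nat) && P i j'].

Section ColSupport.

Variables (m n : nat) (M : 'M[bool]_(m, n)).

Lemma col_support_ltn lo hi c : col_support M lo hi c -> c < n.
Proof. by case/existsP=> i /existsP [j /and3P [_ /eqP <- _]]. Qed.

Lemma col_support_sub lo hi lo' hi' c :
  lo' <= lo -> hi <= hi' -> col_support M lo hi c -> col_support M lo' hi' c.
Proof.
move=> le_lo le_hi /existsP [i /existsP [j /and3P [/andP [lo_i i_hi] jc Mij]]].
by apply/existsP; exists i; apply/existsP; exists j; rewrite jc Mij andbT; apply/andP; lia.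
Qed.

Lemma col_support_row (a : 'I_m) (b : 'I_n) : col_support M a a.+1 b = M a b.
Proof.
apply/idP/idP => [/existsP [i /existsP [j /and3P [/andP [le_ai lt_ia] /eqP jb Mij]]] | Mab].
  have /val_inj <- : nat_of_ord i = a by lia.
  by have /val_inj <- := jb.
by apply/existsP; exists a; apply/existsP; exists b; rewrite leqnn ltnSn eqxx Mab.
Qed.

Lemma col_support_set_one (a : 'I_m) (b : 'I_n) lo hi c :
  col_support (set_one M a b) lo hi c -> col_support M lo hi c || (lo <= a < hi) && (c == b).
Proof.
case/existsP=> i /existsP [j /and3P [lo_i_hi /eqP jc]]; rewrite mxE.
case/orP=> [Mij | /andP [/eqP <- /eqP jb]]; last by rewrite lo_i_hi -jc jb eqxx orbT.
by apply/orP; left; apply/existsP; exists i; apply/existsP; exists j; rewrite lo_i_hi jc eqxx Mij.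
Qed.

Lemma col_support_set_one_in (a : 'I_m) (b : 'I_n) lo hi c :
  col_support (set_one M a b) lo hi c -> col_support M lo hi c || (c == b).
Proof. by case/col_support_set_one/orP => [-> | /andP [_ ->]]; rewrite ?orbT. Qed.

Lemma col_support_set_one_out (a : 'I_m) (b : 'I_n) lo hi c :
  ~~ (lo <= a < hi) -> col_support (set_one M a b) lo hi c -> col_support M lo hi c.
Proof. by move=> /negbTE a_out /col_support_set_one; rewrite a_out orbF. Qed.

End ColSupport.

Lemma cut_seq_addn r k m i j : cut_seq r k m -> i <= j -> j <= k -> r i + (j - i) <= r j.
Proof.
move=> [_ [_ r_inc]]; elim: j => [|j IHj]; first by rewrite leqn0 => /eqP ->; lia.
rewrite leq_eqVlt => /orP [/eqP -> _|]; first by rewrite subnn addn0.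
by rewrite ltnS => le_ij lt_jk; have := IHj le_ij (ltnW lt_jk); have := r_inc j lt_jk; lia.
Qed.

Section BlockEmbeddings.

Variables (k l m n : nat) (P : 'M[bool]_(k, l)) (M : 'M[bool]_(m, n)).

Lemma embeds_rows_contains (p q : 'I_k) r :
  (forall i j, P i j -> i = p \/ i = q) -> 0 < l -> cut_seq r k m ->
  embeds_rows (pattern_row P p) (pattern_row P q) l n (block_support M r p) (block_support M r q) ->
  contains P M.
Proof.
move=> P_rows l_gt0 r_cut [x [y [hit sep]]].
pose c j := if j == 0 then 0 else if j < l then (maxn (x j.-1) (y j.-1)).+1 else n.
have c_le j : j < l -> c j <= minn (x j) (y j).
  by case: j => [//|j] ltjl; rewrite /c ltjl; exact: sep.
have c_gt j : j < l -> maxn (x j) (y j) < c j.+1.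
  move=> ltjl; rewrite /c /=; case: ifP => // _.
  by have [ltxn ltyn _ _] := hit j ltjl; rewrite gtn_max ltxn ltyn.
have c_cut : cut_seq c l n.
  split=> //; split; first by rewrite /c ltnn gtn_eqF.
  by move=> j ltjl; have := c_le j ltjl; have := c_gt j ltjl; lia.
exists r, c; split=> //; split=> // i j Pij.
have entry v : block_support M r i v -> c j <= v < c j.+1 ->
    exists (a : 'I_m) (b : 'I_n), [/\ r i <= a < r i.+1, c j <= b < c j.+1 & M a b].
  by case/existsP=> a /existsP [b /and3P [a_in /eqP bv Mab]] v_in; exists a, b; rewrite bv.
have row_ij : pattern_row P i j by apply/existsP; exists j; rewrite eqxx.
have := c_le j (ltn_ord j); have := c_gt j (ltn_ord j).
have [_ _ sX tY] := hit j (ltn_ord j).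
have [ip | iq] := P_rows i j Pij; rewrite ?ip ?iq in row_ij entry *.
  by move=> *; apply: entry; [exact: implyP sX row_ij | lia].
by move=> *; apply: entry; [exact: implyP tY row_ij | lia].
Qed.

Lemma contains_embeds_rows (p q : 'I_k) : contains P M ->
  exists r, cut_seq r k m /\ embeds_rows (pattern_row P p) (pattern_row P q) l n
    (block_support M r p) (block_support M r q).
Proof.
move=> [r [c [r_cut [c_cut minor]]]]; exists r; split=> //.
have c_ltn j : j < l -> c j < c j.+1 by case: c_cut => [_ [_ /(_ j)]].
have c_le j : j < l -> c j.+1 <= n.
  by move=> ltjl; have := cut_seq_addn c_cut ltjl (leqnn l); case: c_cut => [_ [-> _]]; lia.
have pick (i : 'I_k) : exists f : nat -> nat, forall j, j < l ->
    [&& c j <= f j, f j < c j.+1 & pattern_row P i j ==> block_support M r i (f j)].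
  apply: (@bounded_choice (fun j v => [&& c j <= v, v < c j.+1 &
    pattern_row P i j ==> block_support M r i v]) l) => j ltjl.
  have [/existsP [j' /andP [/eqP j'j Pij']] | _] := boolP (pattern_row P i j); last first.
    by exists (c j); rewrite leqnn c_ltn.
  have [a [b [a_in /andP [le_b lt_b] Mab]]] := minor i j' Pij'.
  exists b; rewrite -j'j le_b lt_b /=; apply/existsP; exists a; apply/existsP; exists b.
  by rewrite a_in eqxx Mab.
have [x hx] := pick p; have [y hy] := pick q.
exists x, y; split=> j ltjl.
  have /and3P [_ ltx ->] := hx j ltjl; have /and3P [_ lty ->] := hy j ltjl.
  by have := c_le j ltjl; split=> //; lia.
have /and3P [_ ltx _] := hx j (ltnW ltjl); have /and3P [_ lty _] := hy j (ltnW ltjl).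
have /and3P [lex _ _] := hx j.+1 ltjl; have /and3P [ley _ _] := hy j.+1 ltjl.
by rewrite gtn_max !leq_min; lia.
Qed.

End BlockEmbeddings.

(* Block p is [p, T), block q ends at m - (k - q - 1), all other blocks are single rows. *)
Definition two_block_cut (k m p q T : nat) (i : nat) : nat :=
  if i <= p then i else if i <= q then T + (i - p.+1) else m - (k - i).

Lemma two_block_cut_blocks k m p q T : p < q ->
  [/\ two_block_cut k m p q T p = p, two_block_cut k m p q T p.+1 = T,
      two_block_cut k m p q T q = T + (q - p.+1)
    & two_block_cut k m p q T q.+1 = m - (k - q.+1)].
Proof.
move=> ltpq; rewrite /two_block_cut leqnn ltnn ltpq (leqNgt q) ltpq leqnn ltnn.
by rewrite (leqNgt q.+1) ltnS (ltnW ltpq) subnn addn0.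
Qed.

Lemma two_block_cut_seq k m p q T : p < q < k -> p < T -> T + (q - p.+1) < m - (k - q.+1) ->
  cut_seq (two_block_cut k m p q T) k m.
Proof.
move=> /andP [ltpq ltqk] ltpT ltTm; rewrite /cut_seq /two_block_cut.
split=> //; split=> [|i ltik].
  by rewrite (leqNgt k p) (leqNgt k q) ltqk (ltn_trans ltpq ltqk) subnn subn0.
by repeat case: ifP => ?; lia.
Qed.

(* Starts of distinct 0-runs are separated by a 1-entry, hence have distinct ranks. *)
Lemma row_complexity_le m n (M : 'M[bool]_(m, n)) (a : 'I_m) (L : seq nat) :
  (forall b : 'I_n, ~~ M a b -> count_below (col_support M a a.+1) b \in L) ->
  row_complexity M a <= size L.
Proof.
move=> memL; rewrite /row_complexity cardE.
set Z := [set b | _]; set rank := count_below (col_support M a a.+1).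
have rank_ltn (b1 b2 : 'I_n) : b2 \in Z -> b1 < b2 -> rank b1 < rank b2.
  rewrite inE => /andP [_ /forallP run_start] lt12.
  have ltb' : b2.-1 < n by apply: leq_ltn_trans (leq_pred _) (ltn_ord b2).
  have b2_gt0 : 0 < b2 by lia.
  have := run_start (Ordinal ltb'); rewrite /= prednK // eqxx /= -col_support_row => O_prev.
  by apply: (count_below_ltn _ O_prev) => /=; lia.
rewrite -(size_map (fun b : 'I_n => rank b)); apply: uniq_leq_size => [|v /mapP [b]].
  rewrite map_inj_in_uniq ?enum_uniq // => b1 b2; rewrite !mem_enum => Zb1 Zb2 eq_rank.
  apply: val_inj; case: (ltngtP b1 b2) => // [/(rank_ltn _ _ Zb2) | /(rank_ltn _ _ Zb1)];
  by rewrite eq_rank ltnn.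
by rewrite mem_enum inE => /andP [Mab _] ->; exact: memL.
Qed.

Section CriticalRow.

Variables (k l : nat) (P : 'M[bool]_(k, l)) (p q : 'I_k).
Hypotheses (ltpq : p < q) (P_rows : forall i j, P i j -> i = p \/ i = q) (l_gt0 : 0 < l).
Variables (m n : nat) (M : 'M[bool]_(m, n)) (a : 'I_m).
Hypothesis M_avoids : avoids P M.

Local Notation s := (pattern_row P p).
Local Notation t := (pattern_row P q).
Local Notation O := (col_support M a a.+1).
Local Notation g := (q - p.+1).
Local Notation h := (k - q.+1).
(* below (resp. above) covers block q (resp. p) of every cut with row a in block p (resp. q). *)
Local Notation below := (col_support M (a.+1 + g) (m - h)).
Local Notation above := (col_support M p (a - g)).
Local Notation below_ok := ((p <= a) && (a.+1 + g < m - h)).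
Local Notation above_ok := [&& g <= a, p < a - g & a < m - h].

Lemma no_block_embeds r : cut_seq r k m ->
  ~ embeds_rows s t l n (block_support M r p) (block_support M r q).
Proof. by move=> r_cut /(embeds_rows_contains P_rows l_gt0 r_cut). Qed.

Lemma no_embeds_below : below_ok -> ~ embeds_rows s t l n O below.
Proof.
move=> /andP [le_pa lt_m] emb; have ltqk : p < q < k by rewrite ltpq ltn_ord.
apply: (no_block_embeds (two_block_cut_seq ltqk _ lt_m)); first by rewrite ltnS.
rewrite /block_support; have [-> -> -> ->] := two_block_cut_blocks k m a.+1 ltpq.
by apply: embeds_rows_mono emb => // c; apply: col_support_sub.
Qed.

Lemma no_embeds_above : above_ok -> ~ embeds_rows t s l n O above.
Proof.
move=> /and3P [le_ga lt_pa lt_am] /embeds_rows_swap emb.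
have ltqk : p < q < k by rewrite ltpq ltn_ord.
apply: (no_block_embeds (two_block_cut_seq ltqk lt_pa _)); first by rewrite subnK.
rewrite /block_support; have [-> -> -> ->] := two_block_cut_blocks k m (a - g) ltpq.
by apply: embeds_rows_mono emb => // c; apply: col_support_sub; lia.
Qed.

Lemma zero_count_near_gaps (b : 'I_n) : ~~ M a b -> contains P (set_one M a b) ->
  below_ok && (count_below O b \in near_gaps O below n l) ||
  above_ok && (count_below O b \in near_gaps O above n l).
Proof.
move=> Mab /(contains_embeds_rows p q) [r [r_cut emb]].
have Ob : ~~ O b by rewrite col_support_row.
have r_p : p <= r p.
  by have := cut_seq_addn r_cut (leq0n p) (ltnW (ltn_ord p)); case: r_cut => [-> _]; lia.
have r_pq : r p.+1 + g <= r q := cut_seq_addn r_cut ltpq (ltnW (ltn_ord q)).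
have r_qk : r q.+1 + h <= m.
  by have := cut_seq_addn r_cut (ltn_ord q) (leqnn k); case: r_cut => [_ [-> _]]; lia.
have [_ [_ r_inc]] := r_cut; have r_p1 := r_inc p (ltn_ord p); have r_q1 := r_inc q (ltn_ord q).
have [a_p | a_np] := boolP (r p <= a < r p.+1).
  apply/orP; left; apply/andP; split; first by apply/andP; split; lia.
  apply: (count_below_in_near_gaps _ _ Ob (ltn_ord b) _ (no_block_embeds r_cut)).
  - by move=> c; apply: col_support_sub; lia.
  - by move=> c; apply: col_support_sub; lia.
  apply: embeds_rows_mono emb => c; first exact: col_support_set_one_in.
  by apply: col_support_set_one_out; lia.
have [a_q | a_nq] := boolP (r q <= a < r q.+1).
  apply/orP; right; apply/andP; split; first by apply/and3P; split; lia.
  have noemb : ~ embeds_rows t s l n (block_support M r q) (block_support M r p).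
    by move/embeds_rows_swap; exact: no_block_embeds.
  apply: (count_below_in_near_gaps _ _ Ob (ltn_ord b) _ noemb).
  - by move=> c; apply: col_support_sub; lia.
  - by move=> c; apply: col_support_sub; lia.
  apply/embeds_rows_swap; apply: embeds_rows_mono emb => c; last exact: col_support_set_one_in.
  by apply: col_support_set_one_out; lia.
by case: (no_block_embeds r_cut); apply: embeds_rows_mono emb => c; exact: col_support_set_one_out.
Qed.

Lemma critical_row_complexity :
  (forall b : 'I_n, M a b = false -> contains P (set_one M a b)) -> row_complexity M a <= 4 * l * l.
Proof.
move=> crit; have On c : O c -> c < n by exact: col_support_ltn.
pose L := (if below_ok then near_gaps O below n l else [::]) ++
          (if above_ok then near_gaps O above n l else [::]).
apply: (@leq_trans (size L)).
  apply: row_complexity_le => b Mab; rewrite mem_cat.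
  by case/orP: (zero_count_near_gaps Mab (crit b (negbTE Mab))) => /andP [-> ->]; rewrite ?orbT.
rewrite size_cat (_ : 4 * l * l = 2 * l * l + 2 * l * l); last lia.
apply: leq_add; case: ifP => //; first by move/no_embeds_below/(size_near_gaps On).
by move/no_embeds_above/(size_near_gaps On).
Qed.

End CriticalRow.

Theorem lemma3p14 (k l : nat) (P : 'M[bool]_(k, l)) :
  #|[set i : 'I_k | nonempty_row P i]| = 2 -> row_bounding P.
Proof.
move=> /eqP /cards2P [p [q [neq_pq rows_pq]]].
have P_rows i j : P i j -> i = p \/ i = q.
  move=> Pij; have : i \in [set i | nonempty_row P i] by rewrite inE; apply/existsP; exists j.
  by rewrite rows_pq !inE => /orP [/eqP -> | /eqP ->]; [left | right].
have l_gt0 : 0 < l.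
  have : p \in [set i | nonempty_row P i] by rewrite rows_pq !inE eqxx.
  by rewrite inE => /existsP [j _]; exact: leq_ltn_trans (ltn_ord j).
exists (4 * l * l) => m n M [M_avoids crit] a.
have [ltpq | ltqp | eq_pq] := ltngtP p q.
- exact: (critical_row_complexity ltpq P_rows l_gt0 M_avoids (crit a)).
- apply: (critical_row_complexity ltqp _ l_gt0 M_avoids (crit a)).
  by move=> i j /P_rows [-> | ->]; [right | left].
- by case/eqP: neq_pq; apply: val_inj.
Qed.
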